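(* Let $0<a,b<1$ and integers $1\le f<N$, and consider the two-strata persistent gambler's ruin process of the context. For integers $0\le m<n<N$ let $\rho_{m,n}$ and $\rho_{n,m}$ be the one-sided first passage probabilities defined in the context. Then: (I.1) for $\ell\ge1$, $j\ge0$ with $f-\ell\ge0$ and $f+j<N$: $\rho_{f-\ell,f+j}=\dfrac{b/(2a)}{\,j+\ell\frac ba-(\ell+j-1)b\,}$; (I.2) for the same $\ell,j$: $\rho_{f+j,f-\ell}=\dfrac{1/2}{\,(j+1)+(\ell-1)\frac ba-(\ell+j-1)b\,}$; (II.1) for $0\le m<m+\ell\le f-1$: $\rho_{m,m+\ell}=\rho_{m+\ell,m}=\dfrac{1}{2(\ell-(\ell-1)a)}$; (II.2) for $f\le m<m+j<N$: $\rho_{m,m+j}=\rho_{m+j,m}=\dfrac{1}{2(j-(j-1)b)}$.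
   Context: The process $(\mathbf X_j)_{j\ge0}$ on $\mathbb Z\cap[-N,N]$ has increments $\varepsilon_j=\mathbf X_j-\mathbf X_{j-1}\in\{\pm1\}$ with $P(\varepsilon_1=1)=P(\varepsilon_1=-1)=\frac12$ and for $j\ge1$, $P(\varepsilon_{j+1}=1\mid\varepsilon_j=1,|\mathbf X_j|=k)=P(\varepsilon_{j+1}=-1\mid\varepsilon_j=-1,|\mathbf X_j|=k)=a_k$ (reversal with probability $1-a_k$), with $a_k=a$ for $0\le k\le f-1$ and $a_k=b$ for $f\le k<N$; it stops when $|\mathbf X_j|=N$. For $m\neq n$ in $(-N,N)$ and the process started at $\mathbf X_0=m$, let $\mathbf L_{m,n}:=\inf\{j\ge1:\mathbf X_j=n\text{ or }|\mathbf X_j|=N\}$. For $m<n$ define $\rho_{m,n}:=P(\mathbf X_j\ge m,\ j=0,\dots,\mathbf L_{m,n}\mid\mathbf X_0=m)$ and $\rho_{n,m}:=P(\mathbf X_j\le n,\ j=0,\dots,\mathbf L_{n,m}\mid\mathbf X_0=n)$. *)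

From Stdlib Require Import Reals ZArith List Bool.
From Coquelicot Require Import Coquelicot.
Import ListNotations.
Open Scope R_scope.

Definition inc (e : bool) : Z := if e then 1%Z else (-1)%Z.

Definition akp (a b : R) (f : Z) (k : Z) : R :=
  if (Z.abs k <? f)%Z then a else b.

Definition step_prob (a b : R) (f : Z) (prev : bool) (pos : Z) (e : bool) : R :=
  if Bool.eqb prev e then akp a b f pos else 1 - akp a b f pos.

Fixpoint weight_from (a b : R) (f : Z) (prev : bool) (pos : Z) (es : list bool) : R :=
  match es with
  | [] => 1
  | e :: es' => step_prob a b f prev pos e * weight_from a b f e (pos + inc e)%Z es'
  end.

Definition weight (a b : R) (f : Z) (x0 : Z) (es : list bool) : R :=
  match es with
  | [] => 1
  | e :: es' => / 2 * weight_from a b f e (x0 + inc e)%Z es'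
  end.

Fixpoint positions (x : Z) (es : list bool) : list Z :=
  match es with
  | [] => []
  | e :: es' => (x + inc e)%Z :: positions (x + inc e)%Z es'
  end.

Fixpoint all_paths (k : nat) : list (list bool) :=
  match k with
  | O => [[]]
  | S k' => map (cons true) (all_paths k') ++ map (cons false) (all_paths k')
  end.

Definition hits (N target y : Z) : bool := (y =? target)%Z || (Z.abs y =? N)%Z.

Definition stops_at_end (N target : Z) (ps : list Z) : bool :=
  match ps with
  | [] => false
  | _ => forallb (fun y => negb (hits N target y)) (removelast ps)
         && hits N target (last ps 0%Z)
  end.

(** P( L_{x0,target} = k and X_j in [side] for j = 0..L | X_0 = x0 ). *)
Definition event_prob (a b : R) (f N : Z) (side : Z -> bool) (x0 target : Z) (k : nat) : R :=
  fold_right Rplus 0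
    (map (fun es =>
            let ps := positions x0 es in
            if stops_at_end N target ps && side x0 && forallb side ps
            then weight a b f x0 es else 0)
         (all_paths k)).

(** One-sided first passage probabilities rho_{x,y}:
    for x < y the process must stay >= x, for x > y it must stay <= x.
    The probability of the event is the sum over the (finite) values of L. *)
Definition rho (a b : R) (f N : Z) (x y : Z) : R :=
  if (x <? y)%Z
  then Series (event_prob a b f N (fun z => (x <=? z)%Z) x y)
  else Series (event_prob a b f N (fun z => (z <=? x)%Z) x y).

From Stdlib Require Import Reals ZArith List Bool Lia Lra.
From Coquelicot Require Import Coquelicot.
Import ListNotations.
Open Scope R_scope.

(* First-step analysis.  Let u(y), resp. v(y), be the probability of a successful passage
   from y when the last increment was +1, resp. -1.  Conditioning on the next increment
   gives, at every point strictly between the barriers,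
     u(y) = a_y u(y+1) + (1 - a_y) v(y-1),    v(y) = a_y v(y-1) + (1 - a_y) u(y+1).
   Hence u(y) - v(y-1) is constant and u is proportional to the scale function phi with
   phi(y+1) - phi(y) = 1/a_y - 1.  For the upward passage from m to n the boundary values
   u(n) = 1 and v(m-1) = 0 give rho_{m,n} = 1 / (2 a_m phi(n)) with phi(m) = 1; the
   downward passage is the mirror image.  With two strata phi is piecewise linear, which
   yields the closed forms.  The series over the stopping time converge because their
   partial sums are probabilities of disjoint events, hence at most 1. *)

Definition sumR (l : list R) : R := fold_right Rplus 0 l.

Lemma sumR_app (l1 l2 : list R) : sumR (l1 ++ l2) = sumR l1 + sumR l2.
Proof. unfold sumR; induction l1 as [|x l1 IH]; cbn; [ring|]. rewrite IH; ring. Qed.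

Lemma sumR_map_plus {A : Type} (g h : A -> R) (l : list A) :
  sumR (map (fun x => g x + h x) l) = sumR (map g l) + sumR (map h l).
Proof. unfold sumR; induction l as [|x l IH]; cbn; [ring|]. rewrite IH; ring. Qed.

Lemma sumR_map_scal {A : Type} (c : R) (g : A -> R) (l : list A) :
  sumR (map (fun x => c * g x) l) = c * sumR (map g l).
Proof. unfold sumR; induction l as [|x l IH]; cbn; [ring|]. rewrite IH; ring. Qed.

Lemma sumR_map_nonneg {A : Type} (g : A -> R) (l : list A) :
  (forall x, 0 <= g x) -> 0 <= sumR (map g l).
Proof.
  intro Hg. unfold sumR; induction l as [|x l IH]; cbn; [lra|].
  specialize (Hg x). lra.
Qed.

Lemma sumR_all_paths_S (F : list bool -> R) (k : nat) :
  sumR (map F (all_paths (S k))) =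
  sumR (map (fun es => F (true :: es)) (all_paths k)) +
  sumR (map (fun es => F (false :: es)) (all_paths k)).
Proof. cbn [all_paths]. rewrite map_app, sumR_app, !map_map. reflexivity. Qed.

Definition at_zero (c : R) (k : nat) : R := match k with O => c | S _ => 0 end.

Lemma sumR_all_paths_nil (c : R) (k : nat) :
  sumR (map (fun es : list bool => match es with [] => c | _ :: _ => 0 end) (all_paths k))
  = at_zero c k.
Proof.
  destruct k as [|k]; [cbn; ring|].
  rewrite sumR_all_paths_S. cbn.
  unfold sumR; induction (all_paths k); cbn; lra.
Qed.

Lemma is_series_from_succ (u : nat -> R) (l : R) :
  u O = 0 -> is_series (fun k => u (S k)) l -> is_series u l.
Proof.
  intros H0 H. apply is_series_decr_1. rewrite H0. change (plus l (opp 0)) with (l + - 0).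
  rewrite Ropp_0, Rplus_0_r. exact H.
Qed.

Definition indic (x : bool) : R := if x then 1 else 0.

Section FirstPassage.

Variables (a b : R) (f N : Z) (side : Z -> bool) (t : Z).

(* In state (prev, pos) the walk has just moved to pos with increment prev; pos itself
   is not tested. *)
Definition path_term (prev : bool) (pos : Z) (es : list bool) : R :=
  if stops_at_end N t (positions pos es) && forallb side (positions pos es)
  then weight_from a b f prev pos es else 0.

Definition hit_in (k : nat) (prev : bool) (pos : Z) : R :=
  sumR (map (path_term prev pos) (all_paths k)).

Definition after_step (k : nat) (e : bool) (y : Z) : R :=
  at_zero (indic (hits N t y && side y)) k
  + indic (side y && negb (hits N t y)) * hit_in k e y.

Definition arrival_term (e : bool) (y : Z) (es : list bool) : R :=
  if stops_at_end N t (y :: positions y es) && forallb side (y :: positions y es)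
  then weight_from a b f e y es else 0.

Lemma stops_at_end_cons (y : Z) (ps : list Z) :
  stops_at_end N t (y :: ps) =
  match ps with [] => hits N t y | _ :: _ => negb (hits N t y) && stops_at_end N t ps end.
Proof.
  destruct ps as [|z ps]; [reflexivity|].
  unfold stops_at_end. cbn [removelast forallb]. rewrite andb_assoc. reflexivity.
Qed.

Lemma arrival_term_split (e : bool) (y : Z) (es : list bool) :
  arrival_term e y es =
  match es with [] => indic (hits N t y && side y) | _ :: _ => 0 end
  + indic (side y && negb (hits N t y)) * path_term e y es.
Proof.
  unfold arrival_term, path_term. rewrite stops_at_end_cons. cbn [forallb].
  destruct es as [|e' es'].
  - cbn. destruct (hits N t y), (side y); cbn; ring.
  - cbn [positions].
    destruct (stops_at_end N t _), (forallb side _), (hits N t y), (side y);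
      cbn [andb negb indic]; ring.
Qed.

Lemma sumR_arrival_term (k : nat) (e : bool) (y : Z) :
  sumR (map (arrival_term e y) (all_paths k)) = after_step k e y.
Proof.
  rewrite (map_ext _ _ (arrival_term_split e y)), sumR_map_plus, sumR_all_paths_nil,
    sumR_map_scal.
  reflexivity.
Qed.

Lemma hit_in_0 (prev : bool) (pos : Z) : hit_in 0 prev pos = 0.
Proof. unfold hit_in, path_term, sumR. cbn. ring. Qed.

Lemma hit_in_S (k : nat) (prev : bool) (pos : Z) :
  hit_in (S k) prev pos =
  step_prob a b f prev pos true * after_step k true (pos + inc true) +
  step_prob a b f prev pos false * after_step k false (pos + inc false).
Proof.
  unfold hit_in at 1. rewrite sumR_all_paths_S, <- !sumR_arrival_term, <- !sumR_map_scal.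
  f_equal; f_equal; apply map_ext; intro es;
    unfold path_term, arrival_term; cbn [positions weight_from];
    destruct (_ && _); ring.
Qed.

Lemma event_prob_S (x0 : Z) (k : nat) :
  event_prob a b f N side x0 t (S k) =
  indic (side x0) *
    (/ 2 * after_step k true (x0 + inc true) + / 2 * after_step k false (x0 + inc false)).
Proof.
  unfold event_prob. change (fold_right Rplus 0 ?l) with (sumR l).
  rewrite sumR_all_paths_S, <- !sumR_arrival_term, <- !sumR_map_scal, Rmult_plus_distr_l,
    <- !sumR_map_scal.
  f_equal; f_equal; apply map_ext; intro es;
    unfold arrival_term; cbn [positions weight forallb];
    destruct (side x0); cbn [indic]; rewrite ?andb_true_r, ?andb_false_r; cbn [andb];
    destruct (_ && _); ring.
Qed.

Hypotheses (Ha : 0 <= a <= 1) (Hb : 0 <= b <= 1).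

Lemma step_prob_nonneg (prev : bool) (pos : Z) (e : bool) : 0 <= step_prob a b f prev pos e.
Proof. unfold step_prob, akp. destruct (Bool.eqb prev e), (Z.abs pos <? f)%Z; lra. Qed.

Lemma step_prob_total (prev : bool) (pos : Z) :
  step_prob a b f prev pos true + step_prob a b f prev pos false = 1.
Proof. unfold step_prob. destruct prev; cbn; ring. Qed.

Lemma weight_from_nonneg (prev : bool) (pos : Z) (es : list bool) :
  0 <= weight_from a b f prev pos es.
Proof.
  revert prev pos. induction es as [|e es IH]; intros prev pos; cbn; [lra|].
  apply Rmult_le_pos; [apply step_prob_nonneg | apply IH].
Qed.

Lemma hit_in_nonneg (k : nat) (prev : bool) (pos : Z) : 0 <= hit_in k prev pos.
Proof.
  apply sumR_map_nonneg. intro es. unfold path_term.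
  destruct (_ && _); [apply weight_from_nonneg | lra].
Qed.

Lemma sum_n_hit_in_nonneg (n : nat) (prev : bool) (pos : Z) :
  0 <= sum_n (fun k => hit_in k prev pos) n.
Proof.
  induction n as [|n IH]; [rewrite sum_O; apply hit_in_nonneg|].
  rewrite sum_Sn. apply Rplus_le_le_0_compat; [exact IH | apply hit_in_nonneg].
Qed.

Lemma sum_n_at_zero (c : R) (n : nat) : sum_n (at_zero c) n = c.
Proof.
  induction n as [|n IH]; [apply sum_O|].
  rewrite sum_Sn, IH. cbn. unfold plus; cbn. ring.
Qed.

Lemma sum_n_shift (u : nat -> R) (n : nat) :
  sum_n u (S n) = u O + sum_n (fun k => u (S k)) n.
Proof. unfold sum_n. rewrite sum_Sn_m, sum_n_m_S by lia. reflexivity. Qed.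

Lemma sum_n_Rplus (u v : nat -> R) (n : nat) :
  sum_n (fun k => u k + v k) n = sum_n u n + sum_n v n.
Proof. exact (sum_n_plus u v n). Qed.

Lemma sum_n_Rmult_l (c : R) (u : nat -> R) (n : nat) :
  sum_n (fun k => c * u k) n = c * sum_n u n.
Proof. exact (sum_n_scal_l c u n). Qed.

Lemma sum_n_after_step (n : nat) (e : bool) (y : Z) :
  sum_n (fun k => after_step k e y) n =
  indic (hits N t y && side y)
  + indic (side y && negb (hits N t y)) * sum_n (fun k => hit_in k e y) n.
Proof.
  unfold after_step. rewrite sum_n_Rplus, sum_n_at_zero, sum_n_Rmult_l. reflexivity.
Qed.

Lemma sum_n_hit_in_le_1 (n : nat) :
  forall (prev : bool) (pos : Z), sum_n (fun k => hit_in k prev pos) n <= 1.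
Proof.
  induction n as [|n IH]; intros prev pos.
  - rewrite sum_O, hit_in_0. lra.
  - rewrite sum_n_shift, hit_in_0.
    rewrite (sum_n_ext _ _ n (fun k => hit_in_S k prev pos)).
    rewrite sum_n_Rplus, !sum_n_Rmult_l, !sum_n_after_step.
    assert (Hafter : forall e y,
      0 <= indic (hits N t y && side y)
           + indic (side y && negb (hits N t y)) * sum_n (fun k => hit_in k e y) n <= 1).
    { intros e y.
      pose proof (sum_n_hit_in_nonneg n e y).
      specialize (IH e y).
      destruct (hits N t y), (side y); cbn [andb negb indic]; lra. }
    pose proof (Hafter true (pos + inc true)%Z).
    pose proof (Hafter false (pos + inc false)%Z).
    pose proof (step_prob_nonneg prev pos true).
    pose proof (step_prob_nonneg prev pos false).
    pose proof (step_prob_total prev pos).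
    nra.
Qed.

Lemma ex_series_hit_in (prev : bool) (pos : Z) : ex_series (fun k => hit_in k prev pos).
Proof.
  destruct (ex_finite_lim_seq_incr (sum_n (fun k => hit_in k prev pos)) 1) as [l Hl].
  - intro n. rewrite sum_Sn. pose proof (hit_in_nonneg (S n) prev pos).
    change (plus ?x ?y) with (x + y). lra.
  - intro n. apply sum_n_hit_in_le_1.
  - exists l. exact Hl.
Qed.

Definition hit_prob (prev : bool) (pos : Z) : R := Series (fun k => hit_in k prev pos).

Definition arrival_prob (e : bool) (y : Z) : R :=
  indic (hits N t y && side y) + indic (side y && negb (hits N t y)) * hit_prob e y.

Lemma is_series_at_zero (c : R) : is_series (at_zero c) c.
Proof.
  change (is_lim_seq (sum_n (at_zero c)) c).
  apply (is_lim_seq_ext (fun _ => c)); [|apply is_lim_seq_const].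
  intro n. symmetry. apply sum_n_at_zero.
Qed.

Lemma is_series_after_step (e : bool) (y : Z) :
  is_series (fun k => after_step k e y) (arrival_prob e y).
Proof.
  apply (is_series_plus (at_zero _) (fun k => scal _ (hit_in k e y))).
  - apply is_series_at_zero.
  - exact (is_series_scal _ _ _ (Series_correct _ (ex_series_hit_in e y))).
Qed.

Lemma hit_prob_first_step (prev : bool) (pos : Z) :
  hit_prob prev pos =
  step_prob a b f prev pos true * arrival_prob true (pos + inc true) +
  step_prob a b f prev pos false * arrival_prob false (pos + inc false).
Proof.
  apply is_series_unique, is_series_from_succ; [apply hit_in_0|].
  eapply is_series_ext; [intro k; symmetry; apply hit_in_S|].
  exact (is_series_plus _ _ _ _ (is_series_scal _ _ _ (is_series_after_step _ _))
                                (is_series_scal _ _ _ (is_series_after_step _ _))).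
Qed.

Lemma event_prob_series (x0 : Z) :
  Series (event_prob a b f N side x0 t) =
  indic (side x0) *
    (/ 2 * arrival_prob true (x0 + inc true) + / 2 * arrival_prob false (x0 + inc false)).
Proof.
  apply is_series_unique, is_series_from_succ; [unfold event_prob; cbn; ring|].
  eapply is_series_ext; [intro k; symmetry; apply event_prob_S|].
  exact (is_series_scal _ _ _
           (is_series_plus _ _ _ _ (is_series_scal _ _ _ (is_series_after_step _ _))
                                   (is_series_scal _ _ _ (is_series_after_step _ _)))).
Qed.

Lemma arrival_prob_target (e : bool) : side t = true -> arrival_prob e t = 1.
Proof. intro Ht. unfold arrival_prob, hits. rewrite Z.eqb_refl, Ht. cbn. ring. Qed.

Lemma arrival_prob_outside (e : bool) (y : Z) : side y = false -> arrival_prob e y = 0.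
Proof. intro Hy. unfold arrival_prob. rewrite Hy, andb_false_r. cbn. ring. Qed.

Lemma arrival_prob_interior (y : Z) :
  side y = true -> hits N t y = false ->
  arrival_prob true y =
    akp a b f y * arrival_prob true (y + 1) + (1 - akp a b f y) * arrival_prob false (y - 1) /\
  arrival_prob false y =
    akp a b f y * arrival_prob false (y - 1) + (1 - akp a b f y) * arrival_prob true (y + 1).
Proof.
  intros Hs Hh.
  assert (Hy : forall e, arrival_prob e y = hit_prob e y).
  { intro e. unfold arrival_prob. rewrite Hs, Hh. cbn. ring. }
  rewrite !Hy, !hit_prob_first_step. cbn [inc step_prob Bool.eqb].
  replace (y + -1)%Z with (y - 1)%Z by ring.
  split; ring.
Qed.

End FirstPassage.

Lemma persistent_recursion_up (al u v phi : Z -> R) (lo hi : Z) :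
  (lo < hi)%Z ->
  (forall x, (lo <= x < hi)%Z -> al x <> 0) ->
  (forall x, (lo <= x < hi)%Z -> u x = al x * u (x + 1)%Z + (1 - al x) * v (x - 1)%Z) ->
  (forall x, (lo <= x < hi)%Z -> v x = al x * v (x - 1)%Z + (1 - al x) * u (x + 1)%Z) ->
  u hi = 1 -> v (lo - 1)%Z = 0 ->
  phi lo = 1 -> (forall x, (lo <= x < hi)%Z -> phi (x + 1)%Z = phi x + (/ al x - 1)) ->
  u (lo + 1)%Z = / (al lo * phi hi).
Proof.
  intros Hlohi Hal Hu Hv Hu_hi Hv_lo Hphi_lo Hphi.
  (* u(x) - v(x-1) is conserved, and u grows along phi. *)
  assert (Hscale : forall x, (lo <= x)%Z -> (x <= hi)%Z ->
            u x - v (x - 1)%Z = u lo /\ u x = u lo * phi x).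
  { apply (Z.le_ind (fun x => (x <= hi)%Z -> u x - v (x - 1)%Z = u lo /\ u x = u lo * phi x)).
    - intros x y ->. reflexivity.
    - intros _. rewrite Hv_lo, Hphi_lo. split; ring.
    - intros x Hx IH Hxhi. unfold Z.succ in *.
      destruct (IH ltac:(lia)) as [Hdiff Hux].
      pose proof (Hu x ltac:(lia)) as Eu. pose proof (Hv x ltac:(lia)) as Ev.
      pose proof (Hal x ltac:(lia)) as Hx0.
      replace (x + 1 - 1)%Z with x by ring.
      assert (Hjump : u (x + 1)%Z - v (x - 1)%Z = u lo / al x).
      { rewrite <- Hdiff, Eu. field. exact Hx0. }
      rewrite Hphi by lia. split.
      + rewrite Ev, <- Hdiff, Eu. ring.
      + replace (u (x + 1)%Z) with (u lo / al x + v (x - 1)%Z) by lra.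
        replace (v (x - 1)%Z) with (u x - u lo) by lra.
        rewrite Hux. field. exact Hx0. }
  destruct (Hscale hi ltac:(lia) ltac:(lia)) as [_ Hhi].
  destruct (Hscale (lo + 1)%Z ltac:(lia) ltac:(lia)) as [_ Hlo1].
  rewrite Hphi, Hphi_lo in Hlo1 by lia.
  rewrite Hu_hi in Hhi.
  pose proof (Hal lo ltac:(lia)).
  assert (phi hi <> 0) by (intro E; rewrite E in Hhi; lra).
  assert (Hu_lo : u lo = / phi hi).
  { apply (Rmult_eq_reg_r (phi hi)); [|assumption]. rewrite Rinv_l by assumption. lra. }
  rewrite Hlo1, Hu_lo. field. auto.
Qed.

Lemma persistent_recursion_down (al u v psi : Z -> R) (lo hi : Z) :
  (lo < hi)%Z ->
  (forall x, (lo < x <= hi)%Z -> al x <> 0) ->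
  (forall x, (lo < x <= hi)%Z -> u x = al x * u (x + 1)%Z + (1 - al x) * v (x - 1)%Z) ->
  (forall x, (lo < x <= hi)%Z -> v x = al x * v (x - 1)%Z + (1 - al x) * u (x + 1)%Z) ->
  v lo = 1 -> u (hi + 1)%Z = 0 ->
  psi hi = 1 -> (forall x, (lo < x <= hi)%Z -> psi (x - 1)%Z = psi x + (/ al x - 1)) ->
  v (hi - 1)%Z = / (al hi * psi lo).
Proof.
  intros Hlohi Hal Hu Hv Hv_lo Hu_hi Hpsi_hi Hpsi.
  pose proof (persistent_recursion_up (fun x => al (- x)%Z) (fun x => v (- x)%Z)
    (fun x => u (- x)%Z) (fun x => psi (- x)%Z) (- hi) (- lo)) as H.
  cbv beta in H.
  replace (- (- hi + 1))%Z with (hi - 1)%Z in H by ring.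
  rewrite !Z.opp_involutive in H.
  apply H; clear H.
  - lia.
  - intros x Hx. apply Hal. lia.
  - intros x Hx. replace (- (x + 1))%Z with (- x - 1)%Z by ring.
    replace (- (x - 1))%Z with (- x + 1)%Z by ring. apply Hv. lia.
  - intros x Hx. replace (- (x + 1))%Z with (- x - 1)%Z by ring.
    replace (- (x - 1))%Z with (- x + 1)%Z by ring. apply Hu. lia.
  - exact Hv_lo.
  - replace (- (- hi - 1))%Z with (hi + 1)%Z by ring. exact Hu_hi.
  - exact Hpsi_hi.
  - intros x Hx. replace (- (x + 1))%Z with (- x - 1)%Z by ring. apply Hpsi. lia.
Qed.

Lemma inv_sub_1_nonneg (c : R) : 0 < c <= 1 -> 0 <= / c - 1.
Proof.
  intro Hc. replace (/ c - 1) with ((1 - c) / c) by (field; lra).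
  apply Rdiv_le_0_compat; lra.
Qed.

Section TwoStrata.

Variables (a b : R) (f N : Z).
Hypotheses (Ha : 0 < a < 1) (Hb : 0 < b < 1).

Lemma akp_bounds (x : Z) : 0 < akp a b f x < 1.
Proof. unfold akp. destruct (Z.abs x <? f)%Z; lra. Qed.

Lemma akp_below (x : Z) : (0 <= x < f)%Z -> akp a b f x = a.
Proof.
  intro Hx. unfold akp. rewrite Z.abs_eq, (proj2 (Z.ltb_lt x f)) by lia. reflexivity.
Qed.

Lemma akp_above (x : Z) : (0 <= f <= x)%Z -> akp a b f x = b.
Proof.
  intro Hx. unfold akp. rewrite Z.abs_eq, (proj2 (Z.ltb_ge x f)) by lia. reflexivity.
Qed.

Lemma hits_inside (t y : Z) : y <> t -> Z.abs y <> N -> hits N t y = false.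
Proof.
  intros Hyt HyN. unfold hits.
  rewrite (proj2 (Z.eqb_neq y t) Hyt), (proj2 (Z.eqb_neq _ N) HyN). reflexivity.
Qed.

Lemma rho_up_scale (m n : Z) (phi : Z -> R) :
  (0 <= m < n)%Z -> (n < N)%Z ->
  phi m = 1 -> (forall x, (m <= x < n)%Z -> phi (x + 1)%Z = phi x + (/ akp a b f x - 1)) ->
  rho a b f N m n = / (2 * akp a b f m * phi n).
Proof.
  intros Hmn HnN Hphi_m Hphi.
  assert (Ha' : 0 <= a <= 1) by lra. assert (Hb' : 0 <= b <= 1) by lra.
  set (side := fun z => (m <=? z)%Z).
  assert (Hside : forall z, (m <= z)%Z -> side z = true) by (intros z Hz; apply Z.leb_le, Hz).
  assert (Hint : forall x, (m <= x < n)%Z -> side x = true /\ hits N n x = false)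
    by (intros x Hx; split; [apply Hside | apply hits_inside]; lia).
  unfold rho. rewrite (proj2 (Z.ltb_lt m n)) by lia. fold side.
  rewrite event_prob_series by assumption. cbn [inc].
  replace (m + -1)%Z with (m - 1)%Z by ring.
  rewrite Hside, (arrival_prob_outside a b f N side n false (m - 1)) by (try apply Z.leb_gt; lia).
  rewrite (persistent_recursion_up (akp a b f) (arrival_prob a b f N side n true)
             (arrival_prob a b f N side n false) phi m n); try assumption.
  - rewrite !Rinv_mult. cbn [indic]. ring.
  - lia.
  - intros x _. pose proof (akp_bounds x). lra.
  - intros x Hx. apply (arrival_prob_interior a b f N side n Ha' Hb' x); apply Hint, Hx.
  - intros x Hx. apply (arrival_prob_interior a b f N side n Ha' Hb' x); apply Hint, Hx.
  - apply arrival_prob_target, Hside. lia.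
  - apply arrival_prob_outside, Z.leb_gt. lia.
Qed.

Lemma rho_down_scale (m n : Z) (psi : Z -> R) :
  (0 <= m < n)%Z -> (n < N)%Z ->
  psi n = 1 -> (forall x, (m < x <= n)%Z -> psi (x - 1)%Z = psi x + (/ akp a b f x - 1)) ->
  rho a b f N n m = / (2 * akp a b f n * psi m).
Proof.
  intros Hmn HnN Hpsi_n Hpsi.
  assert (Ha' : 0 <= a <= 1) by lra. assert (Hb' : 0 <= b <= 1) by lra.
  set (side := fun z => (z <=? n)%Z).
  assert (Hside : forall z, (z <= n)%Z -> side z = true) by (intros z Hz; apply Z.leb_le, Hz).
  assert (Hint : forall x, (m < x <= n)%Z -> side x = true /\ hits N m x = false)
    by (intros x Hx; split; [apply Hside | apply hits_inside]; lia).
  unfold rho. rewrite (proj2 (Z.ltb_ge n m)) by lia. fold side.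
  rewrite event_prob_series by assumption. cbn [inc].
  replace (n + -1)%Z with (n - 1)%Z by ring.
  rewrite Hside, (arrival_prob_outside a b f N side m true (n + 1)) by (try apply Z.leb_gt; lia).
  rewrite (persistent_recursion_down (akp a b f) (arrival_prob a b f N side m true)
             (arrival_prob a b f N side m false) psi m n); try assumption.
  - rewrite !Rinv_mult. cbn [indic]. ring.
  - lia.
  - intros x _. pose proof (akp_bounds x). lra.
  - intros x Hx. apply (arrival_prob_interior a b f N side m Ha' Hb' x); apply Hint, Hx.
  - intros x Hx. apply (arrival_prob_interior a b f N side m Ha' Hb' x); apply Hint, Hx.
  - apply arrival_prob_target, Hside. lia.
  - apply arrival_prob_outside, Z.leb_gt. lia.
Qed.

Lemma rho_within_stratum (m l : Z) (c : R) :
  (0 <= m)%Z -> (1 <= l)%Z -> (m + l < N)%Z ->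
  (forall x, (m <= x <= m + l)%Z -> akp a b f x = c) ->
  rho a b f N m (m + l) = 1 / (2 * (IZR l - IZR (l - 1) * c)) /\
  rho a b f N (m + l) m = 1 / (2 * (IZR l - IZR (l - 1) * c)).
Proof.
  intros Hm Hl HmlN Hc.
  assert (Hc01 : 0 < c < 1) by (rewrite <- (Hc m) by lia; apply akp_bounds).
  set (P := 1 + IZR l * (/ c - 1)).
  assert (HP : 0 < P).
  { unfold P. pose proof (inv_sub_1_nonneg c ltac:(lra)).
    pose proof (IZR_le 0 l ltac:(lia)). nra. }
  replace (IZR l - IZR (l - 1) * c) with (c * P) by (unfold P; rewrite minus_IZR; field; lra).
  split.
  - rewrite (rho_up_scale m (m + l) (fun x => 1 + IZR (x - m) * (/ c - 1))); try lia.
    + rewrite Hc by lia. replace (m + l - m)%Z with l by ring. fold P. field. lra.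
    + rewrite Z.sub_diag. ring.
    + intros x Hx. rewrite Hc by lia. rewrite !minus_IZR, plus_IZR. ring.
  - rewrite (rho_down_scale m (m + l) (fun x => 1 + IZR (m + l - x) * (/ c - 1))); try lia.
    + rewrite Hc by lia. replace (m + l - m)%Z with l by ring. fold P. field. lra.
    + rewrite Z.sub_diag. ring.
    + intros x Hx. rewrite Hc by lia. rewrite !minus_IZR, !plus_IZR. ring.
Qed.

Definition scale (x : Z) : R :=
  IZR (Z.min x f) * (/ a - 1) + IZR (Z.max x f - f) * (/ b - 1).

Lemma scale_succ (x : Z) : (0 <= x)%Z -> scale (x + 1) = scale x + (/ akp a b f x - 1).
Proof.
  intro Hx. unfold scale, akp. rewrite Z.abs_eq by lia.
  destruct (Z.ltb_spec x f).
  - rewrite Z.min_l, Z.min_l, Z.max_r, Z.max_r by lia. rewrite plus_IZR. ring.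
  - rewrite Z.min_r, Z.min_r, Z.max_l, Z.max_l by lia. rewrite !minus_IZR, plus_IZR. ring.
Qed.

Lemma scale_below (x : Z) : (x <= f)%Z -> scale x = IZR x * (/ a - 1).
Proof. intro Hx. unfold scale. rewrite Z.min_l, Z.max_r, Z.sub_diag by lia. ring. Qed.

Lemma scale_above (x : Z) : (f <= x)%Z ->
  scale x = IZR f * (/ a - 1) + IZR (x - f) * (/ b - 1).
Proof. intro Hx. unfold scale. rewrite Z.min_r, Z.max_l by lia. reflexivity. Qed.

Lemma scale_le (x y : Z) : (x <= y)%Z -> scale x <= scale y.
Proof.
  intro Hxy. unfold scale.
  pose proof (inv_sub_1_nonneg a ltac:(lra)). pose proof (inv_sub_1_nonneg b ltac:(lra)).
  apply Rplus_le_compat; apply Rmult_le_compat_r; auto; apply IZR_le; lia.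
Qed.

Lemma rho_up_two_strata (m n : Z) : (0 <= m < n)%Z -> (n < N)%Z ->
  rho a b f N m n = / (2 * akp a b f m * (1 + scale n - scale m)).
Proof.
  intros Hmn HnN. apply (rho_up_scale m n (fun x => 1 + scale x - scale m)); auto.
  - ring.
  - intros x Hx. rewrite scale_succ by lia. ring.
Qed.

Lemma rho_down_two_strata (m n : Z) : (0 <= m < n)%Z -> (n < N)%Z ->
  rho a b f N n m = / (2 * akp a b f n * (1 + scale (n + 1) - scale (m + 1))).
Proof.
  intros Hmn HnN. apply (rho_down_scale m n (fun x => 1 + scale (n + 1) - scale (x + 1))); auto.
  - ring.
  - intros x Hx. replace (x - 1 + 1)%Z with x by ring. rewrite (scale_succ x) by lia. ring.
Qed.

Lemma rho_cross_up (l j : Z) :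
  (1 <= l)%Z -> (0 <= j)%Z -> (0 <= f - l)%Z -> (f + j < N)%Z ->
  rho a b f N (f - l) (f + j)
  = (b / (2 * a)) / (IZR j + IZR l * (b / a) - IZR (l + j - 1) * b).
Proof.
  intros Hl Hj Hfl HfjN.
  rewrite rho_up_two_strata, akp_below by lia.
  pose proof (scale_le (f - l) (f + j) ltac:(lia)).
  set (P := 1 + scale (f + j) - scale (f - l)).
  replace (IZR j + IZR l * (b / a) - IZR (l + j - 1) * b) with (b * P).
  - field. unfold P. lra.
  - unfold P. rewrite scale_above, scale_below by lia.
    repeat first [rewrite plus_IZR | rewrite minus_IZR]. field. lra.
Qed.

Lemma rho_cross_down (l j : Z) :
  (1 <= l)%Z -> (0 <= j)%Z -> (0 <= f - l)%Z -> (f + j < N)%Z ->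
  rho a b f N (f + j) (f - l)
  = (1 / 2) / (IZR (j + 1) + IZR (l - 1) * (b / a) - IZR (l + j - 1) * b).
Proof.
  intros Hl Hj Hfl HfjN.
  rewrite rho_down_two_strata, akp_above by lia.
  pose proof (scale_le (f - l + 1) (f + j + 1) ltac:(lia)).
  set (P := 1 + scale (f + j + 1) - scale (f - l + 1)).
  replace (IZR (j + 1) + IZR (l - 1) * (b / a) - IZR (l + j - 1) * b) with (b * P).
  - field. unfold P. lra.
  - unfold P. rewrite scale_above, scale_below by lia.
    repeat first [rewrite plus_IZR | rewrite minus_IZR]. field. lra.
Qed.

End TwoStrata.

Theorem proposition1 (a b : R) (f N : Z) :
  0 < a < 1 -> 0 < b < 1 -> (1 <= f)%Z -> (f < N)%Z ->
  (* (I.1) *)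
  (forall l j : Z, (1 <= l)%Z -> (0 <= j)%Z -> (0 <= f - l)%Z -> (f + j < N)%Z ->
     rho a b f N (f - l) (f + j)
     = (b / (2 * a)) / (IZR j + IZR l * (b / a) - IZR (l + j - 1) * b)) /\
  (* (I.2) *)
  (forall l j : Z, (1 <= l)%Z -> (0 <= j)%Z -> (0 <= f - l)%Z -> (f + j < N)%Z ->
     rho a b f N (f + j) (f - l)
     = (1 / 2) / (IZR (j + 1) + IZR (l - 1) * (b / a) - IZR (l + j - 1) * b)) /\
  (* (II.1) *)
  (forall m l : Z, (0 <= m)%Z -> (1 <= l)%Z -> (m + l <= f - 1)%Z ->
     rho a b f N m (m + l) = 1 / (2 * (IZR l - IZR (l - 1) * a)) /\
     rho a b f N (m + l) m = 1 / (2 * (IZR l - IZR (l - 1) * a))) /\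
  (* (II.2) *)
  (forall m j : Z, (f <= m)%Z -> (1 <= j)%Z -> (m + j < N)%Z ->
     rho a b f N m (m + j) = 1 / (2 * (IZR j - IZR (j - 1) * b)) /\
     rho a b f N (m + j) m = 1 / (2 * (IZR j - IZR (j - 1) * b))).
Proof.
  intros Ha Hb Hf HfN.
  split; [|split; [|split]].
  - intros l j. apply rho_cross_up; assumption.
  - intros l j. apply rho_cross_down; assumption.
  - intros m l Hm Hl Hml. apply rho_within_stratum; try assumption; try lia.
    intros x Hx. apply akp_below. lia.
  - intros m j Hm Hj Hmj. apply rho_within_stratum; try assumption; try lia.
    intros x Hx. apply akp_above. lia.
Qed.
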